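(* Let $p,q$ be coprime positive integers. Then $E(p,q)=d_c(e^{2\pi i/3},p/q)$.
   Context: Hyperbolic plane is modelled on the upper half-plane $\{\operatorname{Im}z>0\}$ with absolute $\mathbb R\cup\{\infty\}$. The Farey tesselation consists of the hyperbolic geodesics joining $m/n$ and $p'/q'$ (integers, $\infty=1/0$) with $|mq'-np'|=1$; it tesselates the plane into ideal triangles. For a point $z$ not on any Farey line and a rational (or $\infty$) absolute point $r$, $d_c(z,r)$ is the number of Farey lines that intersect the geodesic ray from $z$ to $r$. For coprime positive integers $p,q$, the Euclid complexity $E(p,q)$ is the number of subtractions in the subtractive Euclid algorithm converting the pair $(p,q)$ into $(0,1)$, i.e. the sum of the partial quotients of the continued fraction of $p/q$. *)

From mathcomp Require Import all_boot all_order all_algebra.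
From mathcomp Require Import reals.
Set Implicit Arguments. Unset Strict Implicit. Unset Printing Implicit Defensive.
Import Order.TTheory GRing.Theory Num.Theory.

(* Subtractive Euclid algorithm on (p,q): at each step subtract the smaller
   entry from the larger one (the first from the second on ties), until an
   entry is 0.  [sub_euclid] counts the subtractions; fuel p+q suffices since
   each step decreases p+q. *)
Fixpoint sub_euclid (fuel p q : nat) : nat :=
  match fuel with
  | 0 => 0
  | f.+1 =>
    if (p == 0) || (q == 0) then 0
    else if p <= q then (sub_euclid f p (q - p)).+1
    else (sub_euclid f (p - q) q).+1
  end.

Definition Euclid_complexity (p q : nat) : nat := sub_euclid (p + q) p q.

Local Open Scope ring_scope.

(* Absolute points: [Some r] is the rational r, [None] is infinity = 1/0. *)
Definition apoint := option rat.

(* A Farey line is represented canonically by a pair (a, b) with a : rat and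
   b : apoint, where either b = None (the vertical line from a to infinity)
   or b = Some b' with a < b'.  Farey condition |m q' - n p'| = 1 with the
   endpoints in lowest terms (infinity = 1/0). *)
Definition is_farey (l : rat * apoint) : bool :=
  let a := l.1 in
  match l.2 with
  | None => denq a == 1
  | Some b => (a < b) && (`|numq a * denq b - denq a * numq b| == 1)
  end.

Section Geom.
Variable R : realType.

(* Points of the upper half-plane are pairs (x, y) with y > 0. *)
Definition on_farey (l : rat * apoint) (w : R * R) : Prop :=
  0 < w.2 /\
  match l.2 with
  | None => w.1 = ratr l.1
  | Some b => (w.1 - ratr l.1) * (w.1 - ratr b) + w.2 ^+ 2 = 0
  end.

(* The (closed at z) geodesic ray from z to the absolute point r. *)
Definition on_ray (z : R * R) (r : apoint) (w : R * R) : Prop :=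
  match r with
  | None => w.1 = z.1 /\ z.2 <= w.2
  | Some r' =>
    let rr : R := ratr r' in
    if z.1 == rr then w.1 = z.1 /\ 0 < w.2 /\ w.2 <= z.2
    else
      let c := (z.1 ^+ 2 + z.2 ^+ 2 - rr ^+ 2) / (2 * (z.1 - rr)) in
      [/\ 0 < w.2, (w.1 - c) ^+ 2 + w.2 ^+ 2 = (rr - c) ^+ 2
        & Num.min z.1 rr <= w.1 <= Num.max z.1 rr]
  end.

Definition dc_is (z : R * R) (r : apoint) (n : nat) : Prop :=
  exists s : seq (rat * apoint),
    [/\ uniq s,
        (forall l, l \in s <-> (is_farey l /\ exists w, on_ray z r w /\ on_farey l w))
      & size s = n].

Definition omega3 : R * R := (- (1 / 2), Num.sqrt 3 / 2).

End Geom.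

From mathcomp Require Import all_boot all_order all_algebra.
From mathcomp Require Import reals.
From mathcomp Require Import zify ring lra.
Set Implicit Arguments. Unset Strict Implicit. Unset Printing Implicit Defensive.
Import Order.TTheory GRing.Theory Num.Theory.
Local Open Scope ring_scope.

(* The geodesic ray from w = e^(2 pi i/3) to r = p/q > 0 is an arc of the circle
   through w and r centred on the real axis.  Subtracting circle equations, it meets
   the Farey semicircle over (a, b) iff an affine function, positive at w, vanishes on
   the arc, i.e. iff a < r < b: w lies outside every Farey semicircle because no
   integer lies strictly between two Farey neighbours.  It meets the vertical line
   over the integer a iff 0 <= a < r.
   Writing a Farey line as ((m, n), (m', n')) with m' n - m n' = 1, the lines met are
   those with 0 <= m/n < p/q < m'/n'.  For (p, q + p) they are the line (0, oo) and
   the images under z |-> z / (1 + z) of the lines for (p, q); for (p + q, q) they are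
   (0, oo) and the images under z |-> z + 1 of the lines for (p, q).  Hence every
   subtraction of the Euclid algorithm contributes exactly one line. *)

(* ((m, n), (m', n')) is the line from m/n to m'/n', with n' = 0 for oo. *)
Definition farey_quad := ((int * int) * (int * int))%type.

Definition is_farey_quad (x : farey_quad) : bool :=
  let: ((m, n), (m', n')) := x in [&& 0 < n, 0 <= n' & m' * n - m * n' == 1].

Definition brackets (p q : int) (x : farey_quad) : bool :=
  let: ((m, n), (m', n')) := x in
  [&& is_farey_quad x, 0 <= m, 0 < p * n - q * m & 0 < q * m' - p * n'].

Definition zero_infty : farey_quad := ((0, 1), (1, 0)).

(* The Moebius maps z |-> z / (1 + k z), z |-> z + k and z |-> 1 / z; the last one
   swaps the endpoints to keep them in increasing order. *)
Definition shear_den (k : int) (x : farey_quad) : farey_quad :=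
  let: ((m, n), (m', n')) := x in ((m, n + k * m), (m', n' + k * m')).

Definition shear_num (k : int) (x : farey_quad) : farey_quad :=
  let: ((m, n), (m', n')) := x in ((m + k * n, n), (m' + k * n', n')).

Definition quad_recip (x : farey_quad) : farey_quad :=
  let: ((m, n), (m', n')) := x in ((n', m'), (n, m)).

Lemma shear_denK k : cancel (shear_den k) (shear_den (- k)).
Proof. by case=> [[m n] [m' n']] /=; rewrite !mulNr !addrK. Qed.

Lemma shear_denNK k : cancel (shear_den (- k)) (shear_den k).
Proof. by case=> [[m n] [m' n']] /=; rewrite !mulNr !subrK. Qed.

Lemma shear_numK k : cancel (shear_num k) (shear_num (- k)).
Proof. by case=> [[m n] [m' n']] /=; rewrite !mulNr !addrK. Qed.

Lemma shear_numNK k : cancel (shear_num (- k)) (shear_num k).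
Proof. by case=> [[m n] [m' n']] /=; rewrite !mulNr !subrK. Qed.

Lemma quad_recipK : involutive quad_recip.
Proof. by case=> [[m n] [m' n']]. Qed.

Lemma shear_numE k x : shear_num k x = quad_recip (shear_den k (quad_recip x)).
Proof. by case: x => [[m n] [m' n']]. Qed.

Lemma brackets_farey_quad p q x : brackets p q x -> is_farey_quad x.
Proof. by case: x => [[m n] [m' n']] /andP[]. Qed.

Lemma brackets0 (p q : int) x : 0 <= p -> 0 <= q -> (p == 0) || (q == 0) ->
  brackets p q x = false.
Proof. case: x => [[m n] [m' n']] /= *; apply/negbTE; nia. Qed.

Lemma brackets_recip p q x : 0 <= p -> 0 <= q ->
  brackets q p (quad_recip x) = brackets p q x.
Proof. case: x => [[m n] [m' n']] /= p_ge0 q_ge0; apply/idP/idP => ?; nia. Qed.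

Lemma brackets_shear_den p q x : 0 < p -> 0 <= q ->
  brackets p (q + p) x = (x == zero_infty) || brackets p q (shear_den (-1) x).
Proof.
case: x => [[m n] [m' n']] p_gt0 q_ge0 /=.
apply/idP/idP => [| /orP[/eqP[-> -> -> ->] | bracket_y]]; last 2 first.
- lia.
- have m'_gt0 : 0 < m' by nia.
  lia.
move=> /and4P[/and3P[n_gt0 n'_ge0 /eqP det] m_ge0 gt0 gt0'].
case: eqP => [// | ne0 /=].
have lt_mn : m < n by nia.
have le_m'n' : m' <= n'.
  (* otherwise m' n - m n' >= n + n', unless the line is (0, oo) *)
  case: (ltP 0 n') => [n'_gt0 | n'_le0]; first nia.
  have n'0 : n' = 0 by lia.
  have m'_gt0 : 0 < m' by subst n'; nia.
  have [m'1 n1] : m' = 1 /\ n = 1 by subst n'; nia.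
  by move: ne0; rewrite n'0 m'1 n1 (_ : m = 0) //; lia.
lia.
Qed.

Lemma brackets_shear_num p q x : 0 <= p -> 0 < q ->
  brackets (p + q) q x = (x == zero_infty) || brackets p q (shear_num (-1) x).
Proof.
move=> p_ge0 q_gt0; have q_ge0 := ltW q_gt0.
rewrite -brackets_recip ?addr_ge0 // brackets_shear_den // shear_numE.
by rewrite -[in RHS]brackets_recip // quad_recipK (can2_eq quad_recipK quad_recipK).
Qed.

Lemma uniq_mem_cons_map (T : eqType) (f g : T -> T) (x0 : T) (P : pred T) (s : seq T) :
  cancel f g -> cancel g f -> uniq s -> (forall x, (x \in s) = P x) -> ~~ P (g x0) ->
  uniq (x0 :: map f s) /\ forall x, (x \in x0 :: map f s) = (x == x0) || P (g x).
Proof.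
move=> fK gK uniq_s mem_s Pgx0.
have mem_map_s x : (x \in map f s) = P (g x).
  by rewrite -{1}(gK x) (mem_map (can_inj fK)) mem_s.
split=> [|x]; last by rewrite in_cons mem_map_s.
by rewrite /= mem_map_s Pgx0 (map_inj_uniq (can_inj fK)).
Qed.

Fixpoint farey_brackets (fuel p q : nat) : seq farey_quad :=
  match fuel with
  | 0 => [::]
  | fuel.+1 =>
    if (p == 0)%N || (q == 0)%N then [::]
    else if (p <= q)%N then zero_infty :: map (shear_den 1) (farey_brackets fuel p (q - p))
    else zero_infty :: map (shear_num 1) (farey_brackets fuel (p - q) q)
  end.

Lemma size_farey_brackets fuel p q :
  size (farey_brackets fuel p q) = sub_euclid fuel p q.
Proof.
elim: fuel p q => [//|fuel IH] p q /=.
by case: ifP => // _; case: ifP => _ /=; rewrite size_map IH.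
Qed.

Lemma farey_bracketsP fuel p q : (p + q <= fuel)%N ->
  uniq (farey_brackets fuel p q) /\
  forall x, (x \in farey_brackets fuel p q) = brackets p q x.
Proof.
elim: fuel p q => [|fuel IH] p q le_pq_fuel /=.
  by split=> // x; rewrite brackets0 //; lia.
case: ifP => [pq0 | /norP[p_neq0 q_neq0]].
  by split=> // x; rewrite brackets0 //; lia.
case: leqP => [le_pq | lt_qp].
- have [uniq_s mem_s] := IH p (q - p)%N ltac:(lia).
  have [-> mem_s'] := uniq_mem_cons_map (x0 := zero_infty)
    (shear_denK 1) (shear_denNK 1) uniq_s mem_s isT.
  by split=> // x; rewrite mem_s' -brackets_shear_den -?PoszD ?subnK //; lia.
- have [uniq_s mem_s] := IH (p - q)%N q ltac:(lia).
  have [-> mem_s'] := uniq_mem_cons_map (x0 := zero_infty)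
    (shear_numK 1) (shear_numNK 1) uniq_s mem_s isT.
  by split=> // x; rewrite mem_s' -brackets_shear_num -?PoszD ?subnK //; lia.
Qed.

Definition line_of_quad (x : farey_quad) : rat * apoint :=
  let: ((m, n), (m', n')) := x in
  (m%:~R / n%:~R, if n' == 0 then None else Some (m'%:~R / n'%:~R)).

Definition quad_of_line (l : rat * apoint) : farey_quad :=
  ((numq l.1, denq l.1), if l.2 is Some b then (numq b, denq b) else (1, 0)).

Definition separates (r : rat) (l : rat * apoint) : bool :=
  if l.2 is Some b then l.1 < r < b else 0 <= l.1 < r.

Lemma ltr_frac (m n m' n' : int) : 0 < n -> 0 < n' ->
  (m%:~R / n%:~R < m'%:~R / n'%:~R :> rat) = (m * n' < m' * n).
Proof.
move=> n_gt0 n'_gt0.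
by rewrite ltr_pdivrMr ?ltr0z // mulrAC ltr_pdivlMr ?ltr0z // -!intrM ltr_int.
Qed.

Lemma ltr_numq_denq (a b : rat) : (a < b) = (numq a * denq b < numq b * denq a).
Proof. by rewrite -[a in LHS]divq_num_den -[b in LHS]divq_num_den ltr_frac. Qed.

Lemma numq_frac (m n : int) : 0 < n -> coprimez m n -> numq (m%:~R / n%:~R) = m.
Proof. by move=> n_gt0 cop; rewrite coprimeq_num -?coprimezE // gtr0_sg // mul1r. Qed.

Lemma denq_frac (m n : int) : 0 < n -> coprimez m n -> denq (m%:~R / n%:~R) = n.
Proof. by move=> n_gt0 cop; rewrite coprimeq_den -?coprimezE // gt_eqF // gtr0_norm. Qed.

Lemma quad_of_lineK : cancel quad_of_line line_of_quad.
Proof. by case=> a [b|] /=; rewrite ?denq_eq0 !divq_num_den. Qed.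

Lemma line_of_quadK : {in is_farey_quad, cancel line_of_quad quad_of_line}.
Proof.
case=> [[m n] [m' n']] /and3P[n_gt0 n'_ge0 /eqP det] /=.
have cop : coprimez m n by apply/coprimezP; exists (- n', m') => /=; lia.
rewrite /quad_of_line /= numq_frac ?denq_frac //; have [n'0 | n'_neq0] := eqVneq n' 0.
  subst n'; have m'_gt0 : 0 < m' by nia.
  by have [-> ->] : m' = 1 /\ n = 1 by nia.
have cop' : coprimez m' n' by apply/coprimezP; exists (n, - m) => /=; lia.
by rewrite numq_frac ?denq_frac //; lia.
Qed.

Lemma is_fareyE l : is_farey l = is_farey_quad (quad_of_line l).
Proof.
case: l => a [b|]; rewrite /is_farey /= ?ltr_numq_denq; last by have := denq_gt0 a; lia.
by move: (denq_gt0 a) (denq_gt0 b); move: (numq a) (denq a) (numq b) (denq b); lia.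
Qed.

Lemma ltr_rat_frac (a : rat) (p q : int) : 0 < q ->
  (a < p%:~R / q%:~R) = (numq a * q < p * denq a).
Proof. by move=> q_gt0; rewrite -[a in LHS]divq_num_den ltr_frac. Qed.

Lemma ltr_frac_rat (a : rat) (p q : int) : 0 < q ->
  (p%:~R / q%:~R < a) = (p * denq a < numq a * q).
Proof. by move=> q_gt0; rewrite -[a in LHS]divq_num_den ltr_frac. Qed.

Lemma brackets_quad_of_line (p q : int) l : 0 < p -> 0 < q ->
  brackets p q (quad_of_line l) = is_farey l && separates (p%:~R / q%:~R) l.
Proof.
move=> p_gt0 q_gt0; rewrite is_fareyE.
case: l => a [b|]; rewrite /separates /= ltr_rat_frac ?ltr_frac_rat //.
- by move: (denq_gt0 a) (denq_gt0 b); move: (numq a) (denq a) (numq b) (denq b); nia.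
- by rewrite numq_ge0; move: (denq_gt0 a); move: (numq a) (denq a); nia.
Qed.

Lemma farey_no_int_between (a b : rat) (k : int) : is_farey (a, Some b) -> ~~ (a < k%:~R < b).
Proof.
rewrite is_fareyE -[k%:~R]divr1 -rat1 ltr_rat_frac ?ltr_frac_rat //=.
by move: (denq_gt0 a) (denq_gt0 b); move: (numq a) (denq a) (numq b) (denq b); nia.
Qed.

Lemma affine_root_in_itv (R : realFieldType) (phi : R -> R) (a b u v : R) :
  (forall x, phi x = a * x + b) -> u < v -> 0 < phi u ->
  (exists2 x, u <= x < v & phi x = 0) <-> phi v < 0.
Proof.
move=> phiE lt_uv; rewrite !phiE => phi_u_gt0; split.
  case=> x /andP[le_ux lt_xv]; rewrite phiE => phi_x0.
  have a_lt0 : a < 0 by nra.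
  nra.
move=> phi_v_lt0; have a_lt0 : a < 0 by nra.
have root : a * (- b / a) + b = 0 by field; rewrite lt_eqF.
exists (- b / a); rewrite ?phiE //; apply/andP; split; nra.
Qed.

(* The left-hand side of the equation of the circle with diameter [A, B], at w. *)
Lemma power_omega_gt0 (R : realFieldType) (A B : R) :
  A < B -> (forall k : int, ~~ (A < k%:~R < B)) -> 0 < (-(1/2) - A) * (-(1/2) - B) + 3/4.
Proof.
move=> lt_AB no_int; have /negP no_m1 := no_int (-1); have /negP no_0 := no_int 0.
rewrite rmorphN1 in no_m1; rewrite rmorph0 in no_0.
have [le_A | lt_A] := lerP (-(1/2)) A; first nra.
have [le_B | lt_B] := lerP B (-(1/2)); first nra.
have ge_A : -1 <= A by rewrite leNgt; apply/negP => ?; apply: no_m1; lra.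
have le_B0 : B <= 0 by rewrite leNgt; apply/negP => ?; apply: no_0; lra.
nra.
Qed.

Lemma intr_ge_neg_half (R : realFieldType) (k : int) : (-(1/2) <= k%:~R :> R) = (0 <= k).
Proof.
apply/idP/idP => [le_k | ]; last by rewrite -(ler0z R); lra.
rewrite leNgt; apply/negP => k_lt0.
have : ((k + 1)%:~R : R) <= 0 by rewrite lerz0; lia.
by rewrite intrD; lra.
Qed.

(* The ray from w to t > 0 lies on the circle through w and t centred at
   (ray_center t, 0); ray_height t x is the squared height of that circle above x. *)
Definition ray_center (R : realFieldType) (t : R) : R := (t ^+ 2 - 1) / (1 + 2 * t).

Definition ray_height (R : realFieldType) (t x : R) : R :=
  (t - ray_center t) ^+ 2 - (x - ray_center t) ^+ 2.

Lemma ray_centerE (R : realFieldType) (t : R) : 0 < t ->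
  ray_center t * (1 + 2 * t) = t ^+ 2 - 1.
Proof. by move=> t_gt0; rewrite divfK // gt_eqF //; lra. Qed.

Lemma ray_height_omega (R : realFieldType) (t : R) : 0 < t -> ray_height t (- (1/2)) = 3/4.
Proof. by move=> /ray_centerE; rewrite /ray_height; lra. Qed.

Lemma ray_height_gt0 (R : realFieldType) (t x : R) : 0 < t -> -(1/2) <= x < t ->
  0 < ray_height t x.
Proof.
move=> t_gt0 /andP[le_x lt_x]; have := ray_height_omega t_gt0; rewrite /ray_height => h_omega.
have : 0 < t - 1/2 - 2 * ray_center t by nra.
have -> : (t - ray_center t) ^+ 2 - (x - ray_center t) ^+ 2 =
  (t - x) * (t + x - 2 * ray_center t) by ring.
by move=> ?; apply: mulr_gt0; lra.
Qed.

Lemma on_ray_omegaE (R : realType) (r : rat) w : 0 < r ->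
  on_ray (omega3 R) (Some r) w <->
  [/\ -(1/2) <= w.1 < ratr r, 0 < w.2 & w.2 ^+ 2 = ray_height (ratr r) w.1].
Proof.
rewrite -(ltr0q R) /on_ray /omega3 /=; move: (ratr r : R) => t t_gt0.
have lt_omega_t : -(1/2) < t by lra.
rewrite (lt_eqF lt_omega_t) (min_l (ltW lt_omega_t)) (max_r (ltW lt_omega_t)).
have -> : ((- (1/2)) ^+ 2 + (Num.sqrt 3 / 2) ^+ 2 - t ^+ 2) / (2 * (- (1/2) - t)) = ray_center t.
  by rewrite /ray_center expr_div_n sqr_sqrtr ?ler0n //; field; rewrite gt_eqF ?lt_eqF //; lra.
rewrite /ray_height.
split=> [[w2_gt0 circle /andP[le_w1 le_w1']] | [/andP[le_w1 lt_w1] w2_gt0 w2_sq]].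
  have w2_sq : w.2 ^+ 2 = (t - ray_center t) ^+ 2 - (w.1 - ray_center t) ^+ 2 by lra.
  split=> //; rewrite le_w1 lt_neqAle le_w1' andbT /=.
  by apply/eqP=> w1_t; move: w2_sq; rewrite w1_t subrr; nra.
by split=> //; [lra | rewrite le_w1 ltW].
Qed.

Lemma ray_omega_meets (R : realType) (r : rat) l : 0 < r ->
  (exists w, on_ray (omega3 R) (Some r) w /\ on_farey l w) <->
  exists2 x : R, -(1/2) <= x < ratr r &
    if l.2 is Some b then (x - ratr l.1) * (x - ratr b) + ray_height (ratr r) x = 0
    else x = ratr l.1.
Proof.
move=> r_gt0; have t_gt0 : 0 < (ratr r : R) by rewrite ltr0q.
case: l => a b; split=> [[w [/(on_ray_omegaE _ r_gt0)[w1_itv _ w2_sq] [_ on_l]]] | [x x_itv on_l]].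
  by exists w.1 => //; case: b on_l => [b|] /=; rewrite -?w2_sq.
have h_gt0 := ray_height_gt0 t_gt0 x_itv.
exists (x, Num.sqrt (ray_height (ratr r) x)); split.
  apply/(on_ray_omegaE _ r_gt0); rewrite /= sqrtr_gt0 h_gt0 sqr_sqrtr; [by split | exact: ltW].
rewrite /on_farey /= sqrtr_gt0 h_gt0; split=> //.
by case: b on_l => [b|] /=; rewrite ?sqr_sqrtr ?(ltW h_gt0).
Qed.

Lemma ray_omega_meets_farey (R : realType) (r : rat) l : 0 < r -> is_farey l ->
  (exists w, on_ray (omega3 R) (Some r) w /\ on_farey l w) <-> separates r l.
Proof.
move=> r_gt0; rewrite ray_omega_meets //; have t_gt0 : 0 < (ratr r : R) by rewrite ltr0q.
case: l => a [b|] farey_l /=.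
  have lt_ab : (ratr a : R) < ratr b by rewrite ltr_rat; case/andP: farey_l.
  (* the difference of the equations of the two circles is affine in x *)
  rewrite (affine_root_in_itv (a := 2 * ray_center (ratr r) - ratr a - ratr b)
    (b := ratr a * ratr b + ratr r ^+ 2 - 2 * ray_center (ratr r) * ratr r)); first last.
  - rewrite ray_height_omega //; apply: power_omega_gt0 => // k.
    by rewrite -(ratr_int R) !ltr_rat farey_no_int_between.
  - lra.
  - by move=> x; rewrite /ray_height; ring.
  rewrite /ray_height subrr addr0 /separates /= -!(ltr_rat R).
  by split=> [? | /andP[? ?]]; [apply/andP; split | ]; nra.
have a_int : a = (numq a)%:~R by rewrite -[LHS]divq_num_den (eqP farey_l) rat1 divr1.
have a_ge0 : (0 <= a) = (-(1/2) <= (ratr a : R)).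
  by rewrite a_int ratr_int ler0z intr_ge_neg_half.
rewrite /separates /= a_ge0 -(ltr_rat R).
split=> [[x x_itv x_a] | a_itv]; first by rewrite -x_a.
by exists (ratr a).
Qed.

Theorem lemma12 (R : realType) (p q : nat) :
  (0 < p)%N -> (0 < q)%N -> coprime p q ->
  dc_is (omega3 R) (Some ((p%:Q) / (q%:Q))) (Euclid_complexity p q).
Proof.
move=> p_gt0 q_gt0 _.
have r_gt0 : 0 < p%:Q / q%:Q by rewrite divr_gt0 ?ltr0z.
have [uniq_s mem_s] := farey_bracketsP (leqnn (p + q)).
set s := farey_brackets _ p q in uniq_s mem_s *.
have line_of_quadK_s : {in s, cancel line_of_quad quad_of_line}.
  by move=> x; rewrite mem_s => /brackets_farey_quad/line_of_quadK.
have mem_map_s l : (l \in map line_of_quad s) = (quad_of_line l \in s).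
  apply/mapP/idP => [[x xs ->] | ls]; first by rewrite line_of_quadK_s.
  by exists (quad_of_line l); rewrite ?quad_of_lineK.
exists (map line_of_quad s); split.
- by rewrite (map_inj_in_uniq (can_in_inj line_of_quadK_s)).
- move=> l; rewrite mem_map_s mem_s brackets_quad_of_line ?ltr0z //.
  split=> [/andP[farey_l sep_l] | [farey_l meets_l]].
    by split=> //; apply/(ray_omega_meets_farey R r_gt0 farey_l).
  by rewrite farey_l; apply/(ray_omega_meets_farey R r_gt0 farey_l).
- by rewrite size_map size_farey_brackets.
Qed.
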